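(* Let $\mathbb{K}$ be a distribution of $y\in(0,\infty)$, let $0<\epsilon\le 0.01$, and suppose $\theta^*\in\mathbb{R}^+$ attains $\min_{\theta\in\mathbb{R}^+}\mathrm{CR}(\theta,\mathbb{K})$; write $f^*_{\mathbb{K}}=\mathrm{CR}(\theta^*,\mathbb{K})$. Let $f^\epsilon_{\mathbb{K}}=\inf_{\theta\in[\epsilon,1/\epsilon]}\mathrm{CR}(\theta,\mathbb{K})$. Then $$f^\epsilon_{\mathbb{K}}\le(1+\epsilon)f^*_{\mathbb{K}}.$$
   Context: For threshold $\theta\ge0$ and season length $y>0$: $g(\theta,y)=\frac{1+\theta}{\min\{1,y\}}$ if $y\ge\theta$ and $g(\theta,y)=\frac{y}{\min\{1,y\}}$ otherwise (the competitive ratio of the ski-rental strategy that rents, at cost $1$ per unit time, until time $\theta$ and then buys at cost $1$). $\mathrm{CR}(\theta,\mathbb{K})=\mathbb{E}_{y\sim\mathbb{K}}[g(\theta,y)]$. *)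

From HB Require Import structures.
From mathcomp Require Import all_boot all_order all_algebra.
From mathcomp Require Import all_classical all_reals all_analysis.
Set Implicit Arguments. Unset Strict Implicit. Unset Printing Implicit Defensive.
Import Order.TTheory GRing.Theory Num.Theory.
Local Open Scope ring_scope.
Local Open Scope classical_set_scope.

(* competitive ratio of the threshold-theta ski-rental strategy on season length y *)
Definition g {R : realType} (theta y : R) : R :=
  if theta <= y then (1 + theta) / Num.min 1 y else y / Num.min 1 y.

Definition CR {R : realType} (theta : R) (P : probability R R) : \bar R :=
  (\int[P]_y (g theta y)%:E)%E.

From HB Require Import structures.
From mathcomp Require Import all_boot all_order all_algebra.
From mathcomp Require Import all_classical all_reals all_analysis.
From mathcomp Require Import lra measurable_realfun.

Set Implicit Arguments.
Unset Strict Implicit.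
Unset Printing Implicit Defensive.
Import Order.TTheory GRing.Theory Num.Theory.
Local Open Scope ring_scope.
Local Open Scope classical_set_scope.

(* Raising
   [theta < eps] to [eps] makes buying cost [1 + eps] instead of at least [1]
   and leaves renting unchanged; lowering [theta > 1/eps] to [1/eps] replaces a
   cost of at least [y >= 1/eps] by [1 + 1/eps <= (1 + eps) y].  For [y <= 0],
   [g theta y] does not depend on [theta]. *)

Section SkiRental.
Variable R : realType.

Definition ski_cost (theta y : R) : R := if theta <= y then 1 + theta else y.

Lemma gE (theta y : R) : g theta y = ski_cost theta y / Num.min 1 y.
Proof. by rewrite /g /ski_cost; case: ifP. Qed.

(* Junk values: for [y <= 0] the ratio degenerates to [y / y], i.e. [1] or [0]. *)
Lemma g_nonpos (theta y : R) : 0 <= theta -> y <= 0 -> g theta y = y / y.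
Proof.
move=> theta_ge0 y_le0; have y_le1 : y <= 1 by lra.
rewrite /g (min_r y_le1); case: ifP => // theta_le_y.
have -> : y = 0 by apply/eqP; rewrite eq_le y_le0 (le_trans theta_ge0 theta_le_y).
by rewrite invr0 !mulr0.
Qed.

Lemma g_ge0 (theta y : R) : 0 <= theta -> 0 <= g theta y.
Proof.
move=> theta_ge0; have [y_le0|y_gt0] := lerP y 0.
  by rewrite g_nonpos // mulr_le0 // invr_le0.
rewrite gE divr_ge0 ?le_min ?ltW //.
by rewrite /ski_cost; case: ifP => _; lra.
Qed.

Lemma g_le_scale (c t s : R) : 1 <= c -> 0 <= t -> 0 <= s ->
  (forall y, 0 < y -> ski_cost t y <= c * ski_cost s y) ->
  forall y, g t y <= c * g s y.
Proof.
move=> c_ge1 t_ge0 s_ge0 cost_le y; have [y_le0|y_gt0] := lerP y 0.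
  rewrite !g_nonpos // -[X in X <= _]mul1r ler_wpM2r //.
  by rewrite mulr_le0 // invr_le0.
by rewrite !gE mulrA ler_pM2r ?cost_le // invr_gt0 lt_min ltr01.
Qed.

Lemma ski_cost_raise (a theta y : R) : 0 <= theta <= a -> a <= 1 -> 0 <= y ->
  ski_cost a y <= (1 + a) * ski_cost theta y.
Proof.
move=> /andP[theta_ge0 theta_le_a] a_le1 y_ge0; rewrite /ski_cost.
by case: (lerP a y) => ay; case: (lerP theta y) => thy; nra.
Qed.

Lemma ski_cost_lower (b theta y : R) : 0 < b <= theta -> 0 <= y ->
  ski_cost b y <= (1 + b^-1) * ski_cost theta y.
Proof.
move=> /andP[b_gt0 b_le_theta] y_ge0.
have bVb : b^-1 * b = 1 by rewrite mulVf ?gt_eqF.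
have bV_gt0 : 0 < b^-1 by rewrite invr_gt0.
rewrite /ski_cost.
by case: (lerP b y) => by_; case: (lerP theta y) => thy; nra.
Qed.

Lemma exists_threshold_in_range (eps theta : R) :
  0 < eps -> eps <= 1 -> 0 <= theta ->
  exists2 t, eps <= t <= eps^-1 & forall y, g t y <= (1 + eps) * g theta y.
Proof.
move=> eps_gt0 eps_le1 theta_ge0.
have epsV_ge1 : 1 <= eps^-1 by rewrite invf_ge1.
have [theta_lt|eps_le_theta] := ltP theta eps.
  exists eps; first by rewrite lexx (le_trans eps_le1).
  apply: g_le_scale => //; [lra | exact: ltW | move=> y /ltW].
  by apply: ski_cost_raise; rewrite // theta_ge0 ltW.
have [theta_gt|theta_le] := ltP eps^-1 theta.
  exists eps^-1; first by rewrite lexx (le_trans eps_le1).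
  apply: g_le_scale => //; [lra | lra | move=> y /ltW].
  rewrite -[in X in X * _](invrK eps).
  by apply: ski_cost_lower; rewrite invr_gt0 eps_gt0 (ltW theta_gt).
exists theta; first by rewrite eps_le_theta.
move=> y; rewrite -[X in X <= _]mul1r ler_wpM2r ?g_ge0 //; lra.
Qed.

Lemma measurable_inv : measurable_fun [set: R] (fun x : R => x^-1).
Proof.
rewrite -(setUv [set 0%R]); apply/measurable_funU => //; first exact: measurableC.
split; first exact: measurable_fun_set1.
apply: open_continuous_measurable_fun.
  exact/closed_openC/accessible_closed_set1/hausdorff_accessible/Rhausdorff.
by move=> x; rewrite inE => /eqP x_neq0; apply: inv_continuous.
Qed.

Lemma measurable_g (theta : R) : measurable_fun [set: R] (g theta).
Proof.
have -> : g theta = fun y => ski_cost theta y * (Num.min 1 y)^-1.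
  by apply/funext => y; rewrite gE.
apply: measurable_funM.
  apply: measurable_fun_ifT => //.
  by apply: measurable_fun_ler => //; exact: measurable_cst.
apply: (measurableT_comp measurable_inv).
by apply: measurable_minr => //; exact: measurable_cst.
Qed.

Lemma le_CR_scale (P : probability R R) (c t s : R) : 0 <= c -> 0 <= t -> 0 <= s ->
  (forall y, g t y <= c * g s y) -> (CR t P <= c%:E * CR s P)%E.
Proof.
move=> c_ge0 t_ge0 s_ge0 g_le.
have mg u : measurable_fun [set: R] (fun y => (g u y)%:E).
  by apply/measurable_EFinP; exact: measurable_g.
rewrite /CR -ge0_integralZl_EFin //; last by move=> y _; rewrite lee_fin g_ge0.
apply: ge0_le_integral => //.
- by move=> y _; rewrite lee_fin g_ge0.
- exact: measurable_funeM.
- by move=> y _; rewrite -EFinM lee_fin.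
Qed.

End SkiRental.

Theorem mainTheorem4 (R : realType) (P : probability R R) (eps theta_star : R) :
  P `]0%R, +oo[ = 1%E ->
  0 < eps -> eps <= 100^-1 ->
  0 <= theta_star ->
  (forall theta : R, 0 <= theta -> (CR theta_star P <= CR theta P)%E) ->
  (ereal_inf [set CR theta P | theta in [set t : R | (eps <= t)%R /\ (t <= eps^-1)%R]] <=
     (1 + eps)%:E * CR theta_star P)%E.
Proof.
move=> _ eps_gt0 eps_small theta_star_ge0 _.
have eps_le1 : eps <= 1 by apply: (le_trans eps_small); rewrite invf_le1 ?ltr0n ?ler1n.
have [t /andP[eps_le_t t_le_epsV] g_le] :=
  exists_threshold_in_range eps_gt0 eps_le1 theta_star_ge0.
have c_ge0 : 0 <= 1 + eps by lra.
have t_ge0 : 0 <= t := le_trans (ltW eps_gt0) eps_le_t.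
apply: le_trans (le_CR_scale P c_ge0 t_ge0 theta_star_ge0 g_le).
by apply: ereal_inf_lbound; exists t.
Qed.
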